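(* Let $(V_i)_{i\ge0}$ be a sequence of non-negative integers with $V_i-1\le V_{i+1}\le V_i$ for all $i$. Suppose $\rho=(\rho_1,\dots,\rho_t)\in\mathbb{Z}^t$ has non-negative entries, set $n=\|\rho\|=\sum\rho_i^2$, and suppose that for all integers $0\le k\le n/2$, $$8V_k=\min\{\|c\|-t:\ c\in\mathrm{Char}(\mathbb{Z}^t),\ |c\cdot\rho|=n-2k\}.$$ Then the entries $\rho_i$ with $\rho_i\ge2$ (as a multiset) are determined by the sequence $(V_i)_{i\ge0}$; in particular they are independent of $n$ and $t$.
   Context: $\mathbb{Z}^t$ carries the standard inner product, $\|c\|=c\cdot c$, and $\mathrm{Char}(\mathbb{Z}^t)$ is the set of vectors all of whose coordinates are odd. *)

From mathcomp Require Import all_boot all_order all_algebra.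
Set Implicit Arguments. Unset Strict Implicit. Unset Printing Implicit Defensive.
Import Order.TTheory GRing.Theory Num.Theory.
Local Open Scope ring_scope.

Definition normZ (t : nat) (c : 'I_t -> int) : int := \sum_(i < t) c i ^+ 2.
Definition dotZ (t : nat) (c d : 'I_t -> int) : int := \sum_(i < t) c i * d i.
Definition is_char (t : nat) (c : 'I_t -> int) : Prop := forall i, ~~ (2 %| c i)%Z.

Definition char_set (t : nat) (rho : 'I_t -> int) (k : nat) (c : 'I_t -> int) : Prop :=
  is_char c /\ `|dotZ c rho| = normZ rho - 2 * k%:Z.

Definition min_cond (V : nat -> nat) (t : nat) (rho : 'I_t -> int) : Prop :=
  forall k : nat, 2 * k%:Z <= normZ rho ->
    (exists c, char_set rho k c /\ normZ c - t%:Z = 8 * (V k)%:Z) /\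
    (forall c, char_set rho k c -> 8 * (V k)%:Z <= normZ c - t%:Z).

Definition big_entries (t : nat) (rho : 'I_t -> int) : seq int :=
  [seq rho i | i <- enum 'I_t & 2 <= rho i].

From mathcomp Require Import all_boot all_order all_algebra zify ring.
Set Implicit Arguments. Unset Strict Implicit. Unset Printing Implicit Defensive.
Import Order.TTheory GRing.Theory Num.Theory.
Local Open Scope ring_scope.

(* For M >= 3 let cost M r c = (2M - 1)(c^2 - 1) - 8(c r - r^2) and let min_cost M r be its
   minimum over odd c.  For a characteristic vector c, summing over the coordinates gives
   (2M - 1)(||c|| - t) + 8(n - c.rho); grouping the c according to k = (n - c.rho)/2 and using
   the hypothesis yields
     sum_i min_cost M rho_i = min_{0 <= k <= N} 8 (2k + (2M - 1) V_k),
   where n = sum_i rho_i + 2N and N is the first zero of V.  Hence these sums depend on V only.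
   Since min_cost M r = 8 r (r - 1) for 0 <= r < M and min_cost M M = 8 M (M - 1) - 8,
   comparing them with sum_i rho_i (rho_i - 1) = 2N recovers, from the largest value down, the
   number of entries equal to each M >= 3, and then the number equal to 2. *)

Definition cost (M r c : int) : int := (2 * M - 1) * (c ^+ 2 - 1) - 8 * (c * r - r ^+ 2).

(* Odd c outside [1, max 1 r] never do better (see min_cost_le), so a finite search suffices. *)
Definition min_cost_index (M r : int) : 'I_((absz r).-1 %/ 2).+1 :=
  [arg min_(j < ord0) cost M r (2 * (j : nat)%:Z + 1)]%O.

Definition min_cost_arg (M r : int) : int := 2 * (min_cost_index M r : nat)%:Z + 1.

Definition min_cost (M r : int) : int := cost M r (min_cost_arg M r).

Lemma min_cost_index_min (M r : int) (j : nat) :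
  (j <= (absz r).-1 %/ 2)%N -> min_cost M r <= cost M r (2 * j%:Z + 1).
Proof.
rewrite -ltnS => hj; rewrite /min_cost /min_cost_arg /min_cost_index.
by have [i _ /(_ (Ordinal hj) isT)] := @arg_minP _ _ _ ord0 xpredT
  (fun j : 'I_((absz r).-1 %/ 2).+1 => cost M r (2 * (j : nat)%:Z + 1)) isT.
Qed.

Lemma min_cost_le (M r c : int) :
  3 <= M -> 0 <= r -> ~~ (2 %| c)%Z -> min_cost M r <= cost M r c.
Proof.
move=> hM hr hc.
have le_pos (j : nat) : min_cost M r <= cost M r (2 * j%:Z + 1).
  elim: j => [|j IH]; first exact: min_cost_index_min.
  have [hj|hj] := leqP j.+1 ((absz r).-1 %/ 2); first exact: min_cost_index_min.
  apply: le_trans IH _; have : r <= 2 * j.+1%:Z by lia.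
  rewrite /cost; nia.
have [a ->] : exists a, c = 2 * a + 1 by exists (c %/ 2)%Z; lia.
have [ha|ha] := lerP 0 a.
  by have -> : a = (absz a)%:Z by lia.
apply: le_trans (le_pos (absz (- a - 1))) _.
have -> : (absz (- a - 1))%:Z = - a - 1 by lia.
rewrite /cost; nia.
Qed.

Lemma min_cost_arg_odd (M r : int) : ~~ (2 %| min_cost_arg M r)%Z.
Proof. rewrite /min_cost_arg; lia. Qed.

Lemma min_cost_arg_mul_bounds (M r : int) : 0 <= r -> r <= min_cost_arg M r * r <= r ^+ 2.
Proof.
move=> hr; rewrite /min_cost_arg.
have := ltn_ord (min_cost_index M r); move: (nat_of_ord _) => j hj.
have : 2 * j%:Z + 1 <= r \/ r = 0 by lia.
case=> [|->]; nia.
Qed.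

Lemma min_cost_small (M r : int) : 3 <= M -> 0 <= r < M -> min_cost M r = 8 * (r * (r - 1)).
Proof.
move=> hM /andP [hr hrM]; apply/eqP; rewrite eq_le; apply/andP; split.
  have := min_cost_le hM hr (isT : ~~ (2 %| 1)%Z); rewrite /cost; lia.
rewrite /min_cost /min_cost_arg; move: (nat_of_ord _) => j.
have -> : cost M r (2 * j%:Z + 1) =
    8 * (r * (r - 1)) + 4 * j%:Z * ((2 * M - 1) * (j%:Z + 1) - 4 * r).
  by rewrite /cost; ring.
have : j = 0%N \/ (1 <= j)%N by lia.
case=> [->|hj]; nia.
Qed.

Lemma min_cost_diag (M : int) : 3 <= M -> min_cost M M = 8 * (M * (M - 1)) - 8.
Proof.
move=> hM; have hM0 : 0 <= M by lia.
apply/eqP; rewrite eq_le; apply/andP; split.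
  have := min_cost_le hM hM0 (isT : ~~ (2 %| 3)%Z); rewrite /cost; lia.
rewrite /min_cost /min_cost_arg; move: (nat_of_ord _) => j.
have : j = 0%N \/ j = 1%N \/ (2 <= j)%N by lia.
rewrite /cost; case=> [->|[->|hj]]; nia.
Qed.

Lemma sum_cost (M : int) (t : nat) (rho c : 'I_t -> int) :
  \sum_i cost M (rho i) (c i) =
    (2 * M - 1) * (normZ c - t%:Z) + 8 * (normZ rho - dotZ c rho).
Proof.
rewrite /cost /normZ /dotZ sumrB -!mulr_sumr !sumrB.
by rewrite sumr_const card_ord natz; ring.
Qed.

Lemma dvdz_normZ_sub_dotZ (t : nat) (rho c : 'I_t -> int) :
  is_char c -> (2 %| normZ rho - dotZ c rho)%Z.
Proof.
move=> hc; rewrite /normZ /dotZ -sumrB.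
apply: (big_ind (fun x : int => 2 %| x)%Z) => [//|x y|i _]; first lia.
have [a ->] : exists a, c i = 2 * a + 1 by exists (c i %/ 2)%Z; have := hc i; lia.
have [b [->|->]] : exists b, rho i = 2 * b \/ rho i = 2 * b + 1 by exists (rho i %/ 2)%Z; lia.
all: lia.
Qed.

Lemma char_set_dotZ (t : nat) (rho c : 'I_t -> int) (k : nat) : char_set rho k c ->
  exists c', [/\ is_char c', dotZ c' rho = normZ rho - 2 * k%:Z & normZ c' = normZ c].
Proof.
case=> hc hd; have [hs|hs] := lerP 0 (dotZ c rho).
  by exists c; rewrite -hd ger0_norm.
exists (fun i => - c i); split.
- by move=> i; have := hc i; lia.
- by rewrite -hd ltr0_norm // /dotZ -sumrN; apply: eq_bigr => i _; rewrite mulNr.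
- by apply: eq_bigr => i _; rewrite sqrrN.
Qed.

Definition ones (t : nat) : 'I_t -> int := fun=> 1.
Arguments ones : clear implicits.

Lemma ones_char (t : nat) : is_char (ones t).
Proof. by []. Qed.

Lemma normZ_ones (t : nat) : normZ (ones t) = t%:Z.
Proof.
by rewrite /normZ (eq_bigr (fun=> 1)) => [|i _]; rewrite ?sumr_const ?card_ord ?natz ?expr1n.
Qed.

Lemma dotZ_ones (t : nat) (rho : 'I_t -> int) : dotZ (ones t) rho = \sum_i rho i.
Proof. by apply: eq_bigr => i _; rewrite mul1r. Qed.

Definition excess (t : nat) (rho : 'I_t -> int) : nat :=
  (absz (normZ rho - \sum_i rho i)%R %/ 2)%N.

Lemma normZ_excess (t : nat) (rho : 'I_t -> int) : (forall i, 0 <= rho i) ->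
  normZ rho = \sum_i rho i + 2 * (excess rho)%:Z.
Proof.
move=> rho_ge0; have := dvdz_normZ_sub_dotZ rho (@ones_char t); rewrite dotZ_ones.
have : 0 <= normZ rho - \sum_i rho i.
  by rewrite /normZ -sumrB; apply: sumr_ge0 => i _; have := rho_ge0 i; nia.
rewrite /excess; lia.
Qed.

Lemma sum_mul_pred_excess (t : nat) (rho : 'I_t -> int) : (forall i, 0 <= rho i) ->
  \sum_i rho i * (rho i - 1) = 2 * (excess rho)%:Z.
Proof.
move=> rho_ge0; have -> : \sum_i rho i * (rho i - 1) = normZ rho - \sum_i rho i.
  by rewrite /normZ -sumrB; apply: eq_bigr => i _; ring.
by rewrite (normZ_excess rho_ge0); ring.
Qed.

Lemma norm_dotZ_le_of_normZ_char (t : nat) (rho c : 'I_t -> int) :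
  is_char c -> normZ c = t%:Z -> `|dotZ c rho| <= \sum_i `|rho i|.
Proof.
move=> hc hn.
have sq1 i : c i ^+ 2 - 1 = 0.
  apply: (@psumr_eq0P _ _ predT (fun i => c i ^+ 2 - 1)) => // [j _|].
    by have := hc j; nia.
  by rewrite sumrB -/(normZ c) hn sumr_const card_ord natz subrr.
apply: (le_trans (ler_norm_sum _ _ _)); apply: ler_sum => i _.
by rewrite normrM; have := sq1 i; nia.
Qed.

Definition profile (V : nat -> nat) (M : int) (k : nat) : int :=
  8 * (2 * k%:Z + (2 * M - 1) * (V k)%:Z).

Section MinimumCondition.
Variables (V : nat -> nat) (t : nat) (rho : 'I_t -> int).
Hypotheses (rho_ge0 : forall i, 0 <= rho i) (rho_min : min_cond V rho).

Lemma excess_V_eq0 : V (excess rho) = 0%N.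
Proof.
have hN := normZ_excess rho_ge0; have hs : 0 <= \sum_i rho i by apply: sumr_ge0.
have [_ hlow] := rho_min (k := excess rho) ltac:(lia).
have : 8 * (V (excess rho))%:Z <= normZ (ones t) - t%:Z.
  by apply: hlow; split; [exact: ones_char | rewrite dotZ_ones ger0_norm //; lia].
rewrite normZ_ones; lia.
Qed.

Lemma excess_V_gt0 (k : nat) : (k < excess rho)%N -> (0 < V k)%N.
Proof.
move=> hk; have hN := normZ_excess rho_ge0.
have hs : \sum_i `|rho i| = \sum_i rho i by apply: eq_bigr => i _; rewrite ger0_norm.
have hs0 : 0 <= \sum_i rho i by apply: sumr_ge0.
have [[c [[hc hd] hV]] _] := rho_min (k := k) ltac:(lia).
rewrite lt0n; apply/eqP => hV0; rewrite hV0 in hV.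
have := norm_dotZ_le_of_normZ_char rho hc ltac:(lia).
rewrite hd hs; lia.
Qed.

Lemma sum_min_cost_le (M : int) (k : nat) : 3 <= M -> 2 * k%:Z <= normZ rho ->
  \sum_i min_cost M (rho i) <= profile V M k.
Proof.
move=> hM hk; have [[c [hc hV]] _] := rho_min hk.
have [c' [hc' hd hn]] := char_set_dotZ hc.
apply: (le_trans (y := \sum_i cost M (rho i) (c' i))).
  by apply: ler_sum => i _; apply: min_cost_le.
rewrite sum_cost hd hn hV /profile; lia.
Qed.

Lemma sum_min_cost_ge (M : int) : 3 <= M ->
  exists2 k, (k <= excess rho)%N & profile V M k <= \sum_i min_cost M (rho i).
Proof.
move=> hM; set c := fun i => min_cost_arg M (rho i).
have hc : is_char c by move=> i; apply: min_cost_arg_odd.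
have hb i := min_cost_arg_mul_bounds M (rho_ge0 i).
have hlo : \sum_i rho i <= dotZ c rho by apply: ler_sum => i _; case/andP: (hb i).
have hhi : dotZ c rho <= normZ rho by apply: ler_sum => i _; case/andP: (hb i).
have hN := normZ_excess rho_ge0; have hs : 0 <= \sum_i rho i by apply: sumr_ge0.
have [k hk] : exists k : nat, normZ rho - dotZ c rho = 2 * k%:Z.
  by exists (absz (normZ rho - dotZ c rho) %/ 2)%N; have := dvdz_normZ_sub_dotZ rho hc; lia.
exists k; first lia.
have [_ /(_ c)] := rho_min (k := k) ltac:(lia).
have -> : \sum_i min_cost M (rho i) = \sum_i cost M (rho i) (c i) by [].
rewrite sum_cost hk /profile => hV; have /hV : char_set rho k c.
  by split => //; rewrite ger0_norm; lia.
nia.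
Qed.

End MinimumCondition.

Lemma excess_eq (V : nat -> nat)
    (t : nat) (rho : 'I_t -> int) (t' : nat) (rho' : 'I_t' -> int) :
  (forall i, 0 <= rho i) -> min_cond V rho ->
  (forall i, 0 <= rho' i) -> min_cond V rho' ->
  excess rho = excess rho'.
Proof.
move=> h0 hm h0' hm'; case: (ltngtP (excess rho) (excess rho')) => // hlt.
- by have := excess_V_gt0 h0' hm' hlt; rewrite (excess_V_eq0 h0 hm).
- by have := excess_V_gt0 h0 hm hlt; rewrite (excess_V_eq0 h0' hm').
Qed.

Lemma sum_min_cost_eq (V : nat -> nat)
    (t : nat) (rho : 'I_t -> int) (t' : nat) (rho' : 'I_t' -> int) (M : int) :
  (forall i, 0 <= rho i) -> min_cond V rho ->
  (forall i, 0 <= rho' i) -> min_cond V rho' -> 3 <= M ->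
  \sum_i min_cost M (rho i) = \sum_i min_cost M (rho' i).
Proof.
have le t1 (rho1 : 'I_t1 -> int) t2 (rho2 : 'I_t2 -> int) :
    (forall i, 0 <= rho1 i) -> min_cond V rho1 ->
    (forall i, 0 <= rho2 i) -> min_cond V rho2 -> 3 <= M ->
    \sum_i min_cost M (rho1 i) <= \sum_i min_cost M (rho2 i).
  move=> h01 hm1 h02 hm2 hM; have [k hk hle] := sum_min_cost_ge h02 hm2 hM.
  apply: le_trans (sum_min_cost_le h01 hm1 hM _) hle.
  have : 0 <= \sum_i rho1 i by apply: sumr_ge0.
  have := normZ_excess h01; rewrite (excess_eq h01 hm1 h02 hm2); lia.
by move=> h0 hm h0' hm' hM; apply/eqP; rewrite eq_le !le.
Qed.

Lemma sum_count_mem_split (f : int -> int) (M : int) (s : seq int) :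
  \sum_(x <- s) f x = f M * (count_mem M s)%:Z + \sum_(x <- [seq y <- s | y != M]) f x.
Proof.
rewrite (bigID (pred1 M)) big_filter /=; congr (_ + _).
rewrite (eq_bigr (fun=> f M)) => [|x /eqP -> //].
by rewrite big_const_seq iter_addr_0 -mulr_natr natz.
Qed.

Lemma perm_eq_count_mem_filter (T : eqType) (M : T) (A B : seq T) :
  count_mem M A = count_mem M B ->
  perm_eq [seq x <- A | x != M] [seq x <- B | x != M] -> perm_eq A B.
Proof.
move=> eM /permP eAB; apply/allP => x _ /=; apply/eqP.
have [-> //|neq] := eqVneq x M.
have ex : predI (pred1 x) (predC1 M) =1 pred1 x.
  by move=> y /=; case: eqVneq => [->|]; rewrite ?neq.
by have := eAB (pred1 x); rewrite !count_filter !(eq_count ex).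
Qed.

Lemma perm_eq_of_min_cost_sums_bounded (m : nat) (A B : seq int) :
  (forall x : int, x \in A ++ B -> 2 <= x <= m.+2%:Z) ->
  \sum_(x <- A) x * (x - 1) = \sum_(x <- B) x * (x - 1) ->
  (forall M : int, 3 <= M -> \sum_(x <- A) min_cost M x = \sum_(x <- B) min_cost M x) ->
  perm_eq A B.
Proof.
elim: m A B => [|m IH] A B hAB hS hK.
  have two x : x \in A ++ B -> x == 2 by move/hAB => hx; apply/eqP; lia.
  have [eA eB] : A = nseq (size A) 2 /\ B = nseq (size B) 2.
    by split; apply/all_pred1P/allP => x hx; apply: two; rewrite mem_cat hx ?orbT.
  move: (size A) (size B) eA eB hS => a b -> -> hS.
  rewrite !big_nseq !iter_addr_0 -[_ *+ a]mulr_natr -[_ *+ b]mulr_natr !natz in hS.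
  by have -> : a = b by lia.
set M : int := m.+3%:Z.
have weight (s : seq int) : (forall x : int, x \in s -> 2 <= x <= M) ->
    8 * \sum_(x <- s) x * (x - 1) - \sum_(x <- s) min_cost M x = 8 * (count_mem M s)%:Z.
  move=> hs; rewrite mulr_sumr -sumrB (sum_count_mem_split _ M).
  rewrite min_cost_diag ?big_seq ?big1 => [|x|]; last lia.
    by rewrite addr0; ring.
  by rewrite mem_filter => /andP [neq /hs hx]; rewrite min_cost_small ?subrr //; lia.
have bound (s : seq int) : {subset s <= A ++ B} -> forall x : int, x \in s -> 2 <= x <= M.
  by move=> sAB x /sAB /hAB.
have sA : {subset A <= A ++ B} by move=> x hx; rewrite mem_cat hx.
have sB : {subset B <= A ++ B} by move=> x hx; rewrite mem_cat hx orbT.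
have eM : count_mem M A = count_mem M B.
  have := weight A (bound _ sA); have := weight B (bound _ sB).
  have hM : 3 <= M by rewrite /M; lia.
  by rewrite hS (hK M hM) => -> /(mulfI _) => /(_ isT) [].
apply: (perm_eq_count_mem_filter eM); apply: IH.
- by move=> x; rewrite -filter_cat mem_filter => /andP [neq /hAB]; lia.
- move: hS.
  by rewrite (sum_count_mem_split _ M A) (sum_count_mem_split _ M B) eM => /addrI.
- move=> M' hM'; move: (hK M' hM').
  by rewrite (sum_count_mem_split _ M A) (sum_count_mem_split _ M B) eM => /addrI.
Qed.

Lemma perm_eq_of_min_cost_sums (A B : seq int) :
  (forall x : int, x \in A ++ B -> 2 <= x) ->
  \sum_(x <- A) x * (x - 1) = \sum_(x <- B) x * (x - 1) ->
  (forall M : int, 3 <= M -> \sum_(x <- A) min_cost M x = \sum_(x <- B) min_cost M x) ->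
  perm_eq A B.
Proof.
move=> hAB; set m := \max_(x <- A ++ B) absz x.
have le_m x : x \in A ++ B -> (absz x <= m)%N by move=> hx; exact: leq_bigmax_seq.
apply: (@perm_eq_of_min_cost_sums_bounded m) => x hx.
by have := le_m x hx; have := hAB x hx; lia.
Qed.

Lemma big_entries_ge2 (t : nat) (rho : 'I_t -> int) (x : int) :
  x \in big_entries rho -> 2 <= x.
Proof. by case/mapP => i; rewrite mem_filter => /andP [h _] ->. Qed.

Lemma sum_big_entries (f : int -> int) (t : nat) (rho : 'I_t -> int) :
  (forall i, 0 <= rho i) -> f 0 = 0 -> f 1 = 0 ->
  \sum_(x <- big_entries rho) f x = \sum_i f (rho i).
Proof.
move=> rho_ge0 f0 f1; rewrite big_map big_filter big_enum_cond big_mkcond /=.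
apply: eq_bigr => i _; case: ifPn => // /negbTE h.
by have [->|->] : rho i = 0 \/ rho i = 1 by have := rho_ge0 i; lia.
Qed.

Theorem theorem2p26 (V : nat -> nat)
  (hV : forall i : nat, (V i.+1 <= V i)%N /\ (V i <= (V i.+1).+1)%N) :
  forall (t : nat) (rho : 'I_t -> int) (t' : nat) (rho' : 'I_t' -> int),
    (forall i, 0 <= rho i) -> min_cond V rho ->
    (forall i, 0 <= rho' i) -> min_cond V rho' ->
    perm_eq (big_entries rho) (big_entries rho').
Proof.
move=> t rho t' rho' h0 hm h0' hm'.
apply: perm_eq_of_min_cost_sums.
- by move=> x; rewrite mem_cat => /orP [] /big_entries_ge2.
- rewrite !sum_big_entries ?mulr0 ?mul0r //.
  by rewrite !sum_mul_pred_excess // (excess_eq h0 hm h0' hm').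
- move=> M hM; have min_cost01 r : 0 <= r <= 1 -> min_cost M r = 0.
    by move=> hr; rewrite min_cost_small //; nia.
  by rewrite !sum_big_entries ?min_cost01 //; exact: sum_min_cost_eq h0 hm h0' hm' hM.
Qed.
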